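(* Let $X$ be an abelian metric group and let $f:X\to\mathbb{R}$ be a subadditive function which is locally bounded above at some point of $X$ (i.e. bounded above on some neighbourhood of that point). Then $f$ is locally bounded at every point of $X$.
   Context: An abelian metric group is an abelian topological group whose topology is given by an invariant metric. A function $f:X\to\mathbb{R}$ is subadditive if $f(x+y)\le f(x)+f(y)$ for all $x,y\in X$. Locally bounded at a point means $|f|$ is bounded on some neighbourhood of that point. *)

From HB Require Import structures.
From mathcomp Require Import all_boot all_order all_algebra.
From mathcomp Require Import reals.
Set Implicit Arguments. Unset Strict Implicit. Unset Printing Implicit Defensive.
Import Order.TTheory GRing.Theory Num.Theory.
Local Open Scope ring_scope.

Definition invariant_metric (R : realType) (X : zmodType) (d : X -> X -> R) : Prop :=
  [/\ forall x y, 0 <= d x y,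
      forall x y, d x y = 0 <-> x = y,
      forall x y, d x y = d y x,
      forall x y z, d x z <= d x y + d y z
    & forall x y z, d (x + z) (y + z) = d x y].

Definition mball (R : realType) (X : zmodType) (d : X -> X -> R) (x : X) (r : R) : X -> Prop :=
  fun y => d x y < r.

(* f is bounded above on some neighbourhood of x (in the metric topology,
   every neighbourhood contains an open ball of positive radius). *)
Definition locally_bounded_above_at (R : realType) (X : zmodType) (d : X -> X -> R)
    (f : X -> R) (x : X) : Prop :=
  exists r : R, 0 < r /\ exists M : R, forall y, mball d x r y -> f y <= M.

Definition locally_bounded_at (R : realType) (X : zmodType) (d : X -> X -> R)
    (f : X -> R) (x : X) : Prop :=
  exists r : R, 0 < r /\ exists M : R, forall y, mball d x r y -> `|f y| <= M.

Definition subadditive (R : realType) (X : zmodType) (f : X -> R) : Prop :=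
  forall x y, f (x + y) <= f x + f y.

From mathcomp Require Import all_boot all_order all_algebra.
From mathcomp Require Import reals.
Set Implicit Arguments. Unset Strict Implicit. Unset Printing Implicit Defensive.
Import Order.TTheory GRing.Theory Num.Theory.
Local Open Scope ring_scope.

(* Translation invariance moves an upper bound [M] of [f] on the ball
   [B(x0, r)] to the bound [M + f (x - x0)] on [B(x, r)], since
   [y = (y + (x0 - x)) + (x - x0)].  An upper bound [M] on [B(x, r)] also
   gives the lower bound [f (x + x) - M] there: [x + x = y + (x + x - y)],
   and the reflection [y |-> x + x - y] maps [B(x, r)] onto itself. *)

Section InvariantBalls.

Variables (R : realType) (X : zmodType) (d : X -> X -> R).
Hypothesis d_sym : forall x y, d x y = d y x.
Hypothesis d_inv : forall x y z, d (x + z) (y + z) = d x y.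

Lemma mballC (x y : X) (r : R) : mball d x r y = mball d y r x.
Proof. by rewrite /mball d_sym. Qed.

Lemma mballD (x y z : X) (r : R) : mball d (x + z) r (y + z) = mball d x r y.
Proof. by rewrite /mball d_inv. Qed.

Lemma mball_reflect (x y : X) (r : R) : mball d x r (x + x - y) = mball d x r y.
Proof.
rewrite mballC -(mballD _ _ (y - x)).
by rewrite addrA subrK addrK [x + _]addrC subrK.
Qed.

Section Subadditive.

Variable f : X -> R.
Hypothesis f_sub : subadditive f.

Lemma subadditive_ub_translate (x0 x : X) (r M : R) :
  (forall y, mball d x0 r y -> f y <= M) ->
  forall y, mball d x r y -> f y <= M + f (x - x0).
Proof.
move=> ub_x0 y xy.
have -> : y = (y + (x0 - x)) + (x - x0) by rewrite -(opprB x0 x) addrK.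
apply: le_trans (f_sub _ _) _; rewrite lerD2r; apply: ub_x0.
by rewrite -[x0 in mball _ x0](subrKC x) mballD.
Qed.

Lemma subadditive_lb_of_ub (x : X) (r M : R) :
  (forall y, mball d x r y -> f y <= M) ->
  forall y, mball d x r y -> f (x + x) - M <= f y.
Proof.
move=> ub_x y xy.
have ub_reflect : f (x + x - y) <= M by apply: ub_x; rewrite mball_reflect.
have := f_sub y (x + x - y); rewrite subrKC => sub_le.
by rewrite lerBlDr (le_trans sub_le) // lerD2l.
Qed.

End Subadditive.

End InvariantBalls.

Theorem corollary2p3 (R : realType) (X : zmodType) (d : X -> X -> R) (f : X -> R) :
  invariant_metric d ->
  subadditive f ->
  (exists x0 : X, locally_bounded_above_at d f x0) ->
  forall x : X, locally_bounded_at d f x.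
Proof.
case=> _ _ d_sym _ d_inv f_sub [x0 [r [r_gt0 [M ub_x0]]]] x.
have ub_x := subadditive_ub_translate d_inv f_sub ub_x0 (x := x).
have lb_x := subadditive_lb_of_ub d_sym d_inv f_sub ub_x.
exists r; split=> //; exists (Num.max (M + f (x - x0)) (M + f (x - x0) - f (x + x))).
move=> y xy; rewrite ler_norml le_max ub_x //= andbT.
by rewrite lerNl le_max; apply/orP; right; rewrite lerNl opprB lb_x.
Qed.
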